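(* Let $\mathcal X,\mathcal Y,\mathcal R$ be sets of binary strings, $r\in\mathbb N$, $F$ a random variable taking values in functions $\mathcal X\to\mathcal Y$, $\mathcal Z\subseteq\mathcal Y^r$, $Z$ a distribution on $\mathcal Z$, $g:\mathcal Z\to\mathcal R$ injective, and $\underline v\in\mathcal X^r$ with pairwise distinct entries. Let $U_B,U_C$ be unitaries, $|\psi\rangle$ a state on $B\otimes C$, $q_B,q_C\in\mathbb N$, and let $\{\Pi_B^w\}_{w\in\mathcal R}$ and $\{\Pi_C^w\}_{w\in\mathcal R}$ be families of pairwise orthogonal projectors on $B$ and $C$ respectively, with $\Pi^w=\Pi_B^w\otimes\Pi_C^w$. Then there is a polynomial $p$ (independent of all other data) such that $$\mathbb E_F\,\mathbb E_{\underline z\leftarrow Z}\Big\|\Pi^{g(\underline z)}\Big((U_BO_B^{F_{\underline v,\underline z}})^{q_B}\otimes(U_CO_C^{F_{\underline v,\underline z}})^{q_C}\Big)|\psi\rangle\Big\|^2\le 9p_{\max}+p(q_B,q_C)\sqrt M,$$ where $p_{\max}=\max_{w\in\mathcal R}\Pr_{\underline z\leftarrow Z}[g(\underline z)=w]$ and $$M=\mathbb E_k\,\mathbb E_l\,\mathbb E_F\,\mathbb E_{\underline z\leftarrow Z}\Big\|(P_{\underline v}\otimes P_{\underline v})\Big((U_BO_B^{F_{\underline v,\underline z}})^{k}\otimes(U_CO_C^{F_{\underline v,\underline z}})^{l}\Big)|\psi\rangle\Big\|^2,$$ with $k$ uniform in $\{0,\dots,q_B-1\}$, $l$ uniform in 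$\{0,\dots,q_C-1\}$.
   Context: For $\underline v\in\mathcal X^r$ with distinct entries and $\underline z\in\mathcal Y^r$, $F_{\underline v,\underline z}$ is the function equal to $F$ except that $F_{\underline v,\underline z}(\underline v_i)=\underline z_i$ for each $i$. For a function $F'$, $O_B^{F'}$ is the oracle unitary $|x\rangle|y\rangle\mapsto|x\rangle|y\oplus F'(x)\rangle$ acting on a query input register (over $\mathcal X$) and output register (over $\mathcal Y$) contained in system $B$ (identity elsewhere); $O_C^{F'}$ likewise on $C$. $P_{\underline v}=\sum_{i=1}^r|\underline v_i\rangle\langle\underline v_i|$ acts on the query input register of the respective system (identity on the rest). *)

From HB Require Import structures.
From mathcomp Require Import all_boot all_order all_algebra all_field.
From mathcomp Require Export mpoly.
Set Implicit Arguments. Unset Strict Implicit. Unset Printing Implicit Defensive.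
Import Order.TTheory GRing.Theory Num.Theory.
Local Open Scope ring_scope.

Definition vec (T : finType) := T -> algC.
Definition op (T : finType) := T -> T -> algC.

Section Ops.
Variable T : finType.
Definition apply (A : op T) (v : vec T) : vec T := fun i => \sum_j A i j * v j.
Definition mulop (A B : op T) : op T := fun i k => \sum_j A i j * B j k.
Definition idop : op T := fun i j => (i == j)%:R.
Definition zeroop : op T := fun _ _ => 0.
Definition adj (A : op T) : op T := fun i j => (A j i)^*.
Definition opexp (A : op T) (n : nat) : op T := iter n (mulop A) idop.
Definition norm2 (v : vec T) : algC := \sum_i `|v i| ^+ 2.
Definition unitary (A : op T) : Prop :=
  mulop (adj A) A = idop /\ mulop A (adj A) = idop.
Definition projector (P : op T) : Prop := mulop P P = P /\ adj P = P.
Definition orth_proj_family (I : eqType) (Pi : I -> op T) : Prop :=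
  (forall w, projector (Pi w)) /\
  (forall w w', w != w' -> mulop (Pi w) (Pi w') = zeroop).
End Ops.

Definition tensor (T1 T2 : finType) (A : op T1) (B : op T2) : op (T1 * T2)%type :=
  fun i j => A i.1 j.1 * B i.2 j.2.

Definition bits (m : nat) := {ffun 'I_m -> bool}.
Definition bxor m (a b : bits m) : bits m := [ffun k => addb (a k) (b k)].

(* A system containing a query input register (basis X), a query output
   register (basis bits m) and a workspace (basis W). *)
Definition sys (X : finType) (m : nat) (W : finType) : finType :=
  ((X * bits m) * W)%type.

(* Oracle unitary |x>|y>|w> |-> |x>|y xor F'(x)>|w> *)
Definition oracle (X : finType) (m : nat) (W : finType) (F' : X -> bits m)
  : op (sys X m W) :=
  fun i j => (i == ((j.1.1, bxor j.1.2 (F' j.1.1)), j.2))%:R.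

(* P_v = sum_i |v_i><v_i| on the query input register, identity elsewhere *)
Definition Pv (X : finType) (m : nat) (W : finType) (r : nat) (v : r.-tuple X)
  : op (sys X m W) :=
  fun i j => ((i == j) && (i.1.1 \in v))%:R.

(* reprogrammed function F_{v,z}: F_{v,z}(v_i) = z_i, F elsewhere *)
Definition reprog (X : finType) (Y : Type) (r : nat) (F : X -> Y)
  (v : r.-tuple X) (z : r.-tuple Y) : X -> Y :=
  fun x => if x \in v then nth (F x) z (index x v) else F x.

Definition distr (T : finType) (mu : T -> algC) : Prop :=
  (forall t, 0 <= mu t) /\ \sum_t mu t = 1.

Definition expect (T : finType) (mu : T -> algC) (h : T -> algC) : algC :=
  \sum_t mu t * h t.

Arguments oracle {X m} W F' _ _.
Arguments Pv {X m} W {r} v _ _.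

(* Write W = U O^{F_{v,z}} for one query step of either party, and
   W' = W (1 - P_v) for the step "with the queries to v projected away".
   Since F_{v,z} and F agree outside v, W' does not depend on z.
   Telescoping W^q = W'^q + D with D = sum_j W'^(q-1-j) W P_v W^j gives
     (W_B^qB (x) W_C^qC) psi = good + (D_B (x) D_C) psi,
     good = (W_B^qB (x) W_C'^qC + W_B'^qB (x) W_C^qC - W_B'^qB (x) W_C'^qC) psi.
   With ||a + b||^2 <= (1+t)||a||^2 + (1+1/t)||b||^2:
   * the projected good part is at most 3(f + 2h), where f, h are the
     weights of Pi_C^w (resp. Pi_B^w) on the z-independent states; summing
     over w gives at most 1, so averaging over z costs at most 9 p_max;
   * the cross term is at most (qB qC)^2 times the average probability M of
     a query to v at intermediate times.
   Choosing t = sqrt M yields the bound with p(x, y) = 9 + 2 (x y)^2. *)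
From HB Require Import structures.
From mathcomp Require Import all_boot all_order all_algebra all_field.
From mathcomp Require Import mpoly.
From mathcomp Require Import ring zify.
From Stdlib Require Import FunctionalExtensionality.
Import Order.TTheory GRing.Theory Num.Theory.
Local Open Scope ring_scope.
Set Implicit Arguments. Unset Strict Implicit. Unset Printing Implicit Defensive.

Section LinearAlgebra.
Variable T : finType.
Implicit Types (A B P : op T) (v w : vec T).

Definition vadd v w : vec T := fun i => v i + w i.
Definition vsub v w : vec T := fun i => v i - w i.
Definition opadd A B : op T := fun i j => A i j + B i j.
Definition opsum n (f : nat -> op T) : op T := fun i j => \sum_(k < n) f k i j.
Definition ip v w : algC := \sum_i (v i)^* * w i.
Definition contr A := forall v, norm2 (apply A v) <= norm2 v.
Definition isom A := forall v, norm2 (apply A v) = norm2 v.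

Lemma sum_delta (F : T -> algC) a : \sum_j ((j == a)%:R * F j) = F a.
Proof.
rewrite (bigD1 a) //= eqxx mul1r big1 ?addr0 // => j /negbTE ->; by rewrite mul0r.
Qed.

Lemma sum_delta' (F : T -> algC) a : \sum_j ((a == j)%:R * F j) = F a.
Proof. under eq_bigr => j _ do rewrite eq_sym. exact: sum_delta. Qed.

Lemma op_ext A B : (forall v, apply A v = apply B v) -> A = B.
Proof.
move=> h; apply: functional_extensionality => i; apply: functional_extensionality => k.
have := congr1 (fun f => f i) (h (fun j => (j == k)%:R)).
rewrite /apply; under eq_bigr => j _ do rewrite mulrC.
rewrite sum_delta; under eq_bigr => j _ do rewrite mulrC.
by rewrite sum_delta.
Qed.

Lemma apply_mulop A B v : apply (mulop A B) v = apply A (apply B v).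
Proof.
apply: functional_extensionality => i; rewrite /apply /mulop.
under eq_bigr => j _ do rewrite mulr_suml.
rewrite exchange_big /=; apply: eq_bigr => k _; rewrite mulr_sumr.
by apply: eq_bigr => j _; rewrite mulrA.
Qed.

Lemma mulopA A B (C : op T) : mulop A (mulop B C) = mulop (mulop A B) C.
Proof. by apply: op_ext => v; rewrite !apply_mulop. Qed.

Lemma apply_id v : apply (@idop T) v = v.
Proof. apply: functional_extensionality => i; exact: sum_delta'. Qed.

Lemma mulop_idl A : mulop (@idop T) A = A.
Proof. by apply: op_ext => v; rewrite apply_mulop apply_id. Qed.

Lemma mulop_idr A : mulop A (@idop T) = A.
Proof. by apply: op_ext => v; rewrite apply_mulop apply_id. Qed.

Lemma apply_opadd A B v : apply (opadd A B) v = vadd (apply A v) (apply B v).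
Proof.
apply: functional_extensionality => i; rewrite /apply /opadd /vadd -big_split.
by apply: eq_bigr => j _; rewrite mulrDl.
Qed.

Lemma apply_opsum n f v :
  apply (opsum n f) v = fun i => \sum_(k < n) apply (f k) v i.
Proof.
apply: functional_extensionality => i; rewrite /apply /opsum exchange_big.
by apply: eq_bigr => j _; rewrite mulr_suml.
Qed.

Lemma apply_vadd A v w : apply A (vadd v w) = vadd (apply A v) (apply A w).
Proof.
apply: functional_extensionality => i; rewrite /apply /vadd -big_split.
by apply: eq_bigr => j _; rewrite mulrDr.
Qed.

Lemma apply_vsub A v w : apply A (vsub v w) = vsub (apply A v) (apply A w).
Proof.
apply: functional_extensionality => i; rewrite /apply /vsub -sumrB.
by apply: eq_bigr => j _; rewrite mulrBr.
Qed.

Lemma apply_vsum (I : finType) A (f : I -> vec T) :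
  apply A (fun i => \sum_k f k i) = fun i => \sum_k apply A (f k) i.
Proof.
apply: functional_extensionality => i; rewrite /apply exchange_big.
by apply: eq_bigr => j _; rewrite mulr_sumr.
Qed.

Lemma norm2_ip v : norm2 v = ip v v.
Proof. by apply: eq_bigr => i _; rewrite normCK mulrC. Qed.

Lemma norm2_ge0 v : 0 <= norm2 v.
Proof. by apply: sumr_ge0 => i _; rewrite exprn_ge0. Qed.

Lemma ip_adj A v w : ip (apply A v) w = ip v (apply (adj A) w).
Proof.
rewrite /ip /apply /adj.
under eq_bigr => i _ do rewrite rmorph_sum mulr_suml.
rewrite exchange_big /=; apply: eq_bigr => j _; rewrite mulr_sumr.
by apply: eq_bigr => i _; rewrite rmorphM; ring.
Qed.

Lemma ip_subl u v w : ip (vsub u v) w = ip u w - ip v w.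
Proof. rewrite /ip -sumrB; apply: eq_bigr => i _; by rewrite rmorphB mulrBl. Qed.

Lemma ip_subr u v w : ip u (vsub v w) = ip u v - ip u w.
Proof. rewrite /ip -sumrB; apply: eq_bigr => i _; by rewrite mulrBr. Qed.

Lemma ip_sum (I : finType) x (f : I -> vec T) :
  ip x (fun i => \sum_w f w i) = \sum_w ip x (f w).
Proof.
rewrite /ip exchange_big; apply: eq_bigr => i _; by rewrite mulr_sumr.
Qed.

Lemma isom_unitary A : unitary A -> isom A.
Proof. by move=> [h1 _] v; rewrite !norm2_ip ip_adj -apply_mulop h1 apply_id. Qed.

Lemma isom_contr A : isom A -> contr A.
Proof. by move=> h v; rewrite h. Qed.

Lemma contr_mulop A B : contr A -> contr B -> contr (mulop A B).
Proof. by move=> hA hB v; rewrite apply_mulop (le_trans (hA _) (hB _)). Qed.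

Lemma isom_mulop A B : isom A -> isom B -> isom (mulop A B).
Proof. by move=> hA hB v; rewrite apply_mulop hA hB. Qed.

Lemma opexpS A n : opexp A n.+1 = mulop A (opexp A n).
Proof. by []. Qed.

Lemma isom_opexp A n : isom A -> isom (opexp A n).
Proof.
move=> h; elim: n => [|n IH] v; first by rewrite apply_id.
exact: isom_mulop.
Qed.

Lemma contr_opexp A n : contr A -> contr (opexp A n).
Proof.
move=> h; elim: n => [|n IH]; last exact: contr_mulop.
by move=> v; rewrite apply_id.
Qed.

(* For a projector, ||P v||^2 = <v, P v>; hence projectors are contractions
   (Pythagoras for v = P v + (v - P v)). *)
Lemma proj_norm2 P v : projector P -> norm2 (apply P v) = ip v (apply P v).
Proof. by move=> [h1 h2]; rewrite norm2_ip ip_adj h2 -apply_mulop h1. Qed.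

Lemma proj_contr P : projector P -> contr P.
Proof.
move=> hP v; have := norm2_ge0 (vsub v (apply P v)).
rewrite norm2_ip ip_subl !ip_subr -(proj_norm2 _ hP) ip_adj.
case: (hP) => _ ->; rewrite -(proj_norm2 _ hP) -norm2_ip.
by rewrite -norm2_ip subrr subr0 subr_ge0.
Qed.

(* The sum of a family of pairwise orthogonal projectors is a projector, so
   the weights of a vector on the members of the family add up to at most
   its squared norm. *)
Lemma orth_sum (I : finType) (Pi : I -> op T) x :
  orth_proj_family Pi -> \sum_w norm2 (apply (Pi w) x) <= norm2 x.
Proof.
move=> [hp ho].
pose Q : op T := fun i j => \sum_w Pi w i j.
have aQ : apply Q x = fun i => \sum_w apply (Pi w) x i.
  apply: functional_extensionality => i; rewrite /apply /Q exchange_big.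
  by apply: eq_bigr => j _; rewrite mulr_suml.
have pQ : projector Q.
  split.
    apply: functional_extensionality => i; apply: functional_extensionality => k.
    transitivity (\sum_w \sum_w' mulop (Pi w) (Pi w') i k).
      rewrite /mulop /Q; under eq_bigr => j _ do rewrite mulr_suml.
      rewrite exchange_big /=; apply: eq_bigr => w _.
      under eq_bigr => j _ do rewrite mulr_sumr.
      by rewrite exchange_big.
    apply: eq_bigr => w _; rewrite (bigD1 w) //= big1 ?addr0.
      by case: (hp w) => -> _.
    by move=> w' hw'; rewrite ho // eq_sym.
  apply: functional_extensionality => i; apply: functional_extensionality => j.
  rewrite /adj /Q rmorph_sum; apply: eq_bigr => w _.
  by case: (hp w) => _ h; rewrite -[in RHS]h.
have := proj_contr pQ x; rewrite proj_norm2 // aQ ip_sum.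
by under eq_bigr => w _ do rewrite -proj_norm2 //.
Qed.

Definition dg (p : pred T) : op T := fun i j => ((i == j) && p i)%:R.

Lemma apply_dg p v : apply (dg p) v = fun i => (p i)%:R * v i.
Proof.
apply: functional_extensionality => i; rewrite /apply /dg.
rewrite (bigD1 i) //= eqxx big1 ?addr0 // => j /negbTE.
by rewrite eq_sym => ->; rewrite mul0r.
Qed.

Lemma contr_dg p : contr (dg p).
Proof.
move=> v; rewrite apply_dg /norm2; apply: ler_sum => i _.
by case: (p i); rewrite ?mul1r ?mul0r ?normr0 ?expr0n //= exprn_ge0.
Qed.

Lemma dg_compl p v : vadd (apply (dg p) v) (apply (dg (predC p)) v) = v.
Proof.
rewrite !apply_dg /vadd; apply: functional_extensionality => i /=.
by case: (p i); rewrite ?mul1r ?mul0r ?addr0 ?add0r.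
Qed.

End LinearAlgebra.

Section Tensor.
Variables T1 T2 : finType.
Implicit Types (y : vec (T1 * T2)%type).

Lemma sum_pair (F : (T1 * T2)%type -> algC) :
  \sum_p F p = \sum_i1 \sum_i2 F (i1, i2).
Proof. by rewrite pair_bigA; apply: eq_bigr => -[]. Qed.

Lemma tensor_mul (A C : op T1) (B D : op T2) :
  mulop (tensor A B) (tensor C D) = tensor (mulop A C) (mulop B D).
Proof.
apply: functional_extensionality => i; apply: functional_extensionality => k.
rewrite /mulop /tensor sum_pair big_distrlr /=; apply: eq_bigr => j1 _.
by apply: eq_bigr => j2 _; ring.
Qed.

Lemma tensor_split (A : op T1) (B : op T2) :
  tensor A B = mulop (tensor A (@idop T2)) (tensor (@idop T1) B).
Proof. by rewrite tensor_mul mulop_idl mulop_idr. Qed.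

Lemma tensor_split' (A : op T1) (B : op T2) :
  tensor A B = mulop (tensor (@idop T1) B) (tensor A (@idop T2)).
Proof. by rewrite tensor_mul mulop_idl mulop_idr. Qed.

Lemma tensor_mulop_id (A C : op T1) :
  tensor (mulop A C) (@idop T2) = mulop (tensor A (@idop T2)) (tensor C (@idop T2)).
Proof. by rewrite tensor_mul mulop_idl. Qed.

Lemma tensor_id_mulop (B D : op T2) :
  tensor (@idop T1) (mulop B D) = mulop (tensor (@idop T1) B) (tensor (@idop T1) D).
Proof. by rewrite tensor_mul mulop_idl. Qed.

Lemma tensor_addl (A C : op T1) (B : op T2) :
  tensor (opadd A C) B = opadd (tensor A B) (tensor C B).
Proof.
apply: functional_extensionality => i; apply: functional_extensionality => k.
by rewrite /tensor /opadd mulrDl.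
Qed.

Lemma tensor_addr (A : op T1) (B D : op T2) :
  tensor A (opadd B D) = opadd (tensor A B) (tensor A D).
Proof.
apply: functional_extensionality => i; apply: functional_extensionality => k.
by rewrite /tensor /opadd mulrDr.
Qed.

Lemma tensor_suml n (f : nat -> op T1) (B : op T2) :
  tensor (opsum n f) B = opsum n (fun j => tensor (f j) B).
Proof.
apply: functional_extensionality => i; apply: functional_extensionality => k.
by rewrite /tensor /opsum mulr_suml.
Qed.

Lemma tensor_sumr n (A : op T1) (f : nat -> op T2) :
  tensor A (opsum n f) = opsum n (fun j => tensor A (f j)).
Proof.
apply: functional_extensionality => i; apply: functional_extensionality => k.
by rewrite /tensor /opsum mulr_sumr.
Qed.

(* A vector on T1 * T2 is a family of slices; an operator acting on one
   factor acts slice by slice, so its norm bounds lift to the product. *)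
Lemma norm2_pair y : norm2 y = \sum_i2 norm2 (fun i1 => y (i1, i2)).
Proof. by rewrite /norm2 sum_pair exchange_big. Qed.

Lemma norm2_pair' y : norm2 y = \sum_i1 norm2 (fun i2 => y (i1, i2)).
Proof. by rewrite /norm2 sum_pair. Qed.

Lemma apply_tl (A : op T1) y i1 i2 :
  apply (tensor A (@idop T2)) y (i1, i2) = apply A (fun j1 => y (j1, i2)) i1.
Proof.
rewrite /apply /tensor sum_pair; apply: eq_bigr => j1 _ /=.
rewrite /idop; under eq_bigr => j2 _ do rewrite -mulrA.
by rewrite -mulr_sumr sum_delta'.
Qed.

Lemma apply_tr (B : op T2) y i1 i2 :
  apply (tensor (@idop T1) B) y (i1, i2) = apply B (fun j2 => y (i1, j2)) i2.
Proof.
rewrite /apply /tensor sum_pair /= exchange_big /=; apply: eq_bigr => j2 _ /=.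
rewrite /idop; under eq_bigr => j1 _ do rewrite [_ * B _ _]mulrC -mulrA.
by rewrite -mulr_sumr sum_delta'.
Qed.

Lemma norm2_tl (A : op T1) y : norm2 (apply (tensor A (@idop T2)) y) =
  \sum_i2 norm2 (apply A (fun i1 => y (i1, i2))).
Proof.
rewrite norm2_pair; apply: eq_bigr => i2 _; apply: eq_bigr => i1 _.
by rewrite apply_tl.
Qed.

Lemma norm2_tr (B : op T2) y : norm2 (apply (tensor (@idop T1) B) y) =
  \sum_i1 norm2 (apply B (fun i2 => y (i1, i2))).
Proof.
rewrite norm2_pair'; apply: eq_bigr => i1 _; apply: eq_bigr => i2 _.
by rewrite apply_tr.
Qed.

Lemma contr_tl (A : op T1) : contr A -> contr (tensor A (@idop T2)).
Proof. move=> h y; rewrite norm2_tl norm2_pair; apply: ler_sum => i _; exact: h. Qed.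

Lemma contr_tr (B : op T2) : contr B -> contr (tensor (@idop T1) B).
Proof. move=> h y; rewrite norm2_tr norm2_pair'; apply: ler_sum => i _; exact: h. Qed.

Lemma isom_tl (A : op T1) : isom A -> isom (tensor A (@idop T2)).
Proof. move=> h y; rewrite norm2_tl norm2_pair; apply: eq_bigr => i _; exact: h. Qed.

Lemma isom_tr (B : op T2) : isom B -> isom (tensor (@idop T1) B).
Proof. move=> h y; rewrite norm2_tr norm2_pair'; apply: eq_bigr => i _; exact: h. Qed.

Lemma contr_tensor (A : op T1) (B : op T2) :
  contr A -> contr B -> contr (tensor A B).
Proof.
by move=> hA hB; rewrite tensor_split; apply: contr_mulop; [apply: contr_tl|apply: contr_tr].
Qed.

Lemma orth_sum_tl (I : finType) (Pi : I -> op T1) y :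
  orth_proj_family Pi -> \sum_w norm2 (apply (tensor (Pi w) (@idop T2)) y) <= norm2 y.
Proof.
move=> h; under eq_bigr => w _ do rewrite norm2_tl.
rewrite exchange_big norm2_pair; apply: ler_sum => i2 _; exact: orth_sum.
Qed.

Lemma orth_sum_tr (I : finType) (Pi : I -> op T2) y :
  orth_proj_family Pi -> \sum_w norm2 (apply (tensor (@idop T1) (Pi w)) y) <= norm2 y.
Proof.
move=> h; under eq_bigr => w _ do rewrite norm2_tr.
rewrite exchange_big norm2_pair'; apply: ler_sum => i1 _; exact: orth_sum.
Qed.

End Tensor.

(* The standard oracle is a permutation of the basis, hence unitary. *)
Lemma oracle_isom (X : finType) (m : nat) (W : finType) (F' : X -> bits m) :
  isom (oracle W F').
Proof.
apply: isom_unitary.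
pose s (j : sys X m W) : sys X m W := ((j.1.1, bxor j.1.2 (F' j.1.1)), j.2).
have ss : forall j, s (s j) = j.
  case=> [[x y] w]; rewrite /s /=; congr (_, _, _).
  by apply/ffunP => k; rewrite !ffunE addbK.
have es : forall i j, (i == s j) = (j == s i).
  by move=> i j; apply/eqP/eqP => ->; rewrite ss.
have oE : forall i j, oracle W F' i j = (i == s j)%:R by [].
split; apply: functional_extensionality => i; apply: functional_extensionality => k;
  rewrite /mulop /adj /idop.
  under eq_bigr => j _ do rewrite !oE conjC_nat mulrC.
  by rewrite sum_delta es ss.
under eq_bigr => j _ do rewrite !oE conjC_nat (es i) (es k).
by rewrite sum_delta es ss eq_sym.
Qed.

(* Queries outside v do not see the reprogramming: after projecting the
   query input register away from v, the oracles of F_{v,z} and F agree. *)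
Lemma oracle_reprog (X : finType) (m : nat) (W : finType) (F : X -> bits m) (r : nat)
  (v : r.-tuple X) (z : r.-tuple (bits m)) :
  mulop (oracle W (reprog F v z)) (dg (predC (fun i : sys X m W => i.1.1 \in v)))
  = mulop (oracle W F) (dg (predC (fun i : sys X m W => i.1.1 \in v))).
Proof.
apply: functional_extensionality => i; apply: functional_extensionality => k.
rewrite /mulop; apply: eq_bigr => j _; rewrite /dg /=.
case hj: (j.1.1 \in v); first by rewrite andbF !mulr0.
by rewrite /oracle /reprog hj.
Qed.

Section Telescope.
Variable T : finType.
Variables (W : op T) (p : pred T).

(* W splits into the part acting after a hit of p and the part W' acting
   after a miss; W^n is W'^n plus the sum over the time j of the first hit. *)
Definition miss_step : op T := mulop W (dg (predC p)).
Definition hit_step : op T := mulop W (dg p).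
Definition first_hit_sum (n : nat) : op T :=
  opsum n (fun j => mulop (opexp miss_step (n.-1 - j)) (mulop hit_step (opexp W j))).

Lemma split_step x : apply W x = vadd (apply hit_step x) (apply miss_step x).
Proof. by rewrite /hit_step /miss_step !apply_mulop -apply_vadd dg_compl. Qed.

Lemma telescope_vec n x : apply (opexp W n) x =
  vadd (apply (opexp miss_step n) x)
   (fun i => \sum_(j < n) apply (opexp miss_step (n.-1 - j))
                             (apply hit_step (apply (opexp W j) x)) i).
Proof.
elim: n x => [|n IH] x.
  by rewrite /= apply_id; apply: functional_extensionality => i; rewrite /vadd big_ord0 addr0.
rewrite opexpS apply_mulop split_step.
have -> : apply miss_step (apply (opexp W n) x) =
    vadd (apply miss_step (apply (opexp miss_step n) x))
     (fun i => \sum_(j < n) apply (opexp miss_step (n - j))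
                               (apply hit_step (apply (opexp W j) x)) i).
  rewrite IH apply_vadd (apply_vsum _ (fun j : 'I_n => apply (opexp miss_step (n.-1 - j))
                                     (apply hit_step (apply (opexp W j) x)))).
  congr vadd; apply: functional_extensionality => i; apply: eq_bigr => j _.
  have -> : (n - j)%N = (n.-1 - j).+1 by have := ltn_ord j; lia.
  by rewrite opexpS apply_mulop.
apply: functional_extensionality => i.
rewrite /vadd big_ord_recr /= subnn /= apply_id apply_mulop; ring.
Qed.

Lemma telescope n : opexp W n = opadd (opexp miss_step n) (first_hit_sum n).
Proof.
apply: op_ext => x; rewrite telescope_vec apply_opadd apply_opsum; congr vadd.
apply: functional_extensionality => i; apply: eq_bigr => j _.
by rewrite !apply_mulop.
Qed.

Lemma contr_miss_step : isom W -> contr miss_step.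
Proof. by move=> h; apply: contr_mulop; [exact: isom_contr|exact: contr_dg]. Qed.

End Telescope.

Lemma sq_real_ge0 (x : algC) : x \is Num.real -> 0 <= x ^+ 2.
Proof. by rewrite realEsqr. Qed.

Lemma sqD_le (a b t : algC) : 0 < t ->
  `|a + b| ^+ 2 <= (1 + t) * `|a| ^+ 2 + (1 + t^-1) * `|b| ^+ 2.
Proof.
move=> t0; have tn0 : t != 0 by rewrite gt_eqF.
have h1 : `|a + b| ^+ 2 <= (`|a| + `|b|) ^+ 2.
  by rewrite ler_pXn2r // ?ler_normD // nnegrE ?addr_ge0.
apply: le_trans h1 _; rewrite -subr_ge0.
have -> : (1 + t) * `|a| ^+ 2 + (1 + t^-1) * `|b| ^+ 2 - (`|a| + `|b|) ^+ 2
   = (t * `|a| - `|b|) ^+ 2 / t by field.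
apply: divr_ge0; last exact: ltW.
by apply: sq_real_ge0; rewrite rpredB ?rpredM ?normr_real ?gtr0_real.
Qed.

Lemma sq3_le (a b c : algC) :
  `|a + b - c| ^+ 2 <= 3 * (`|a| ^+ 2 + `|b| ^+ 2 + `|c| ^+ 2).
Proof.
have h1 : `|a + b - c| ^+ 2 <= (`|a| + `|b| + `|c|) ^+ 2.
  rewrite ler_pXn2r // ?nnegrE ?addr_ge0 //.
  by rewrite (le_trans (ler_normB _ _)) // lerD2r ler_normD.
apply: le_trans h1 _; rewrite -subr_ge0.
have -> : 3 * (`|a| ^+ 2 + `|b| ^+ 2 + `|c| ^+ 2) - (`|a| + `|b| + `|c|) ^+ 2
   = (`|a| - `|b|) ^+ 2 + (`|b| - `|c|) ^+ 2 + (`|a| - `|c|) ^+ 2 by ring.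
by rewrite !addr_ge0 // sq_real_ge0 // rpredB ?normr_real.
Qed.

Section NormInequalities.
Variable T : finType.

Lemma norm2D_le (x d : vec T) t : 0 < t ->
  norm2 (vadd x d) <= (1 + t) * norm2 x + (1 + t^-1) * norm2 d.
Proof.
move=> t0; rewrite /norm2 !mulr_sumr -big_split; apply: ler_sum => i _.
exact: sqD_le.
Qed.

Lemma norm2_3 (a b c : vec T) :
  norm2 (vsub (vadd a b) c) <= 3 * (norm2 a + norm2 b + norm2 c).
Proof.
rewrite /norm2 -!big_split mulr_sumr; apply: ler_sum => i _.
exact: sq3_le.
Qed.

Lemma norm2_sum n (f : 'I_n -> vec T) :
  norm2 (fun i => \sum_(k < n) f k i) <= n%:R * \sum_(k < n) norm2 (f k).
Proof.
elim: n f => [|n IH] f.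
  by rewrite big_ord0 mul0r /norm2 big1 // => i _; rewrite big_ord0 normr0 expr0n.
have -> : (fun i => \sum_(k < n.+1) f k i) =
   vadd (fun i => \sum_(k < n) f (widen_ord (leqnSn n) k) i) (f ord_max).
  by apply: functional_extensionality => i; rewrite big_ord_recr.
rewrite big_ord_recr /=.
case: n IH f => [|n] IH f.
  rewrite big_ord0 add0r mul1r le_eqVlt; apply/orP; left; apply/eqP.
  by apply: eq_bigr => i _; rewrite /vadd big_ord0 add0r.
have t0 : (0 : algC) < n.+1%:R^-1 by rewrite invr_gt0 ltr0n.
apply: le_trans (norm2D_le _ _ t0) _; rewrite invrK.
have := IH (fun k => f (widen_ord (leqnSn n.+1) k)).
move/(ler_wpM2l (_ : 0 <= 1 + n.+1%:R^-1)) => h.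
apply: le_trans (lerD (h _) (lexx _)) _; first by rewrite addr_ge0 // invr_ge0 ler0n.
rewrite mulrA.
have -> : (1 + n.+1%:R^-1) * n.+1%:R = (n.+2%:R : algC).
  by rewrite mulrDl mul1r mulVf ?pnatr_eq0 // natr1.
by rewrite -nat1r mulrDr.
Qed.

Lemma norm2_sum2 n1 n2 (f : 'I_n1 -> 'I_n2 -> vec T) :
  norm2 (fun i => \sum_(j < n1) \sum_(l < n2) f j l i)
  <= n1%:R * n2%:R * \sum_(j < n1) \sum_(l < n2) norm2 (f j l).
Proof.
apply: le_trans (norm2_sum (fun j i => \sum_(l < n2) f j l i)) _.
rewrite -mulrA; apply: ler_wpM2l; first exact: ler0n.
by rewrite mulr_sumr; apply: ler_sum => j _; exact: norm2_sum.
Qed.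

End NormInequalities.

Section PointwiseBound.
Variables T1 T2 : finType.
Variables (WB : op T1) (WC : op T2) (p1 : pred T1) (p2 : pred T2).
Variables (PiB : op T1) (PiC : op T2) (psi : vec (T1 * T2)%type) (qB qC : nat).
Hypotheses (iB : isom WB) (iC : isom WC) (prB : projector PiB) (prC : projector PiC).

(* The evolutions of B and C in which every query to p is projected away. *)
Let XB := opexp (miss_step WB p1) qB.
Let YC := opexp (miss_step WC p2) qC.

(* The part of the final state in which at most one party ever hit p, seen
   through PiB (x) PiC, is controlled by the weight of PiC on YC psi and
   of PiB on XB psi (each occurrence bounded by forgetting the other
   projector and the other, isometric or contracting, evolution). *)
Lemma good_part_bound :
  norm2 (apply (tensor PiB PiC)
    (vsub (vadd (apply (tensor (opexp WB qB) YC) psi)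
                (apply (tensor XB (opexp WC qC)) psi))
          (apply (tensor XB YC) psi)))
  <= 3 * (norm2 (apply (tensor (@idop T1) (mulop PiC YC)) psi)
          + 2 * norm2 (apply (tensor (mulop PiB XB) (@idop T2)) psi)).
Proof.
rewrite apply_vsub apply_vadd; apply: le_trans (norm2_3 _ _ _) _.
apply: ler_wpM2l => //.
rewrite -addrA mulr2n mulrDl mul1r; apply: lerD; last apply: lerD.
- rewrite tensor_split apply_mulop.
  apply: le_trans (contr_tl (T2:=T2) (proj_contr prB) _) _.
  rewrite -apply_mulop tensor_mul mulop_idl tensor_split apply_mulop isom_tl //.
  exact: isom_opexp.
- rewrite tensor_split' apply_mulop.
  apply: le_trans (contr_tr (T1:=T1) (proj_contr prC) _) _.
  rewrite -apply_mulop tensor_mul mulop_idl tensor_split' apply_mulop isom_tr //.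
  exact: isom_opexp.
- rewrite tensor_split' apply_mulop.
  apply: le_trans (contr_tr (T1:=T1) (proj_contr prC) _) _.
  rewrite -apply_mulop tensor_mul mulop_idl tensor_split' apply_mulop.
  exact/contr_tr/contr_opexp/contr_miss_step.
Qed.

(* The part in which both parties hit p is a double sum, over the first hit
   times j and l, of contractions applied to the states projected onto p at
   times j and l. *)
Lemma cross_term_bound :
  norm2 (apply (tensor PiB PiC)
    (apply (tensor (first_hit_sum WB p1 qB) (first_hit_sum WC p2 qC)) psi))
  <= qB%:R * qC%:R * \sum_(j < qB) \sum_(l < qC)
       norm2 (apply (tensor (dg p1) (dg p2))
                    (apply (tensor (opexp WB j) (opexp WC l)) psi)).
Proof.
apply: le_trans (contr_tensor (proj_contr prB) (proj_contr prC) _) _.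
have -> : apply (tensor (first_hit_sum WB p1 qB) (first_hit_sum WC p2 qC)) psi =
    fun i => \sum_(j < qB) \sum_(l < qC)
      apply (tensor (mulop (opexp (miss_step WB p1) (qB.-1 - j))
                           (mulop (hit_step WB p1) (opexp WB j)))
                    (mulop (opexp (miss_step WC p2) (qC.-1 - l))
                           (mulop (hit_step WC p2) (opexp WC l)))) psi i.
  rewrite /first_hit_sum tensor_suml apply_opsum; apply: functional_extensionality => i.
  by apply: eq_bigr => j _; rewrite tensor_sumr apply_opsum.
apply: le_trans (norm2_sum2 _) _.
apply: ler_wpM2l; first by rewrite mulr_ge0 ?ler0n.
apply: ler_sum => j _; apply: ler_sum => l _.
rewrite /hit_step -!(mulopA WB) -!(mulopA WC) !(mulopA (opexp _ _)) -!tensor_mul.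
rewrite !apply_mulop.
apply: le_trans (contr_tensor (contr_opexp _ (contr_miss_step p1 iB))
                              (contr_opexp _ (contr_miss_step p2 iC)) _) _.
exact: (contr_tensor (isom_contr iB) (isom_contr iC)).
Qed.

(* Pointwise bound for fixed oracles: split the final state into the two
   parts above via the telescoping identity for both parties. *)
Lemma pointwise_bound t : 0 < t ->
  norm2 (apply (tensor PiB PiC) (apply (tensor (opexp WB qB) (opexp WC qC)) psi))
  <= (1 + t) * (3 * (norm2 (apply (tensor (@idop T1) (mulop PiC YC)) psi)
                    + 2 * norm2 (apply (tensor (mulop PiB XB) (@idop T2)) psi)))
   + (1 + t^-1) * (qB%:R * qC%:R * \sum_(j < qB) \sum_(l < qC)
        norm2 (apply (tensor (dg p1) (dg p2))
                     (apply (tensor (opexp WB j) (opexp WC l)) psi))).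
Proof.
move=> t0.
have -> : apply (tensor (opexp WB qB) (opexp WC qC)) psi =
    vadd (vsub (vadd (apply (tensor (opexp WB qB) YC) psi)
                     (apply (tensor XB (opexp WC qC)) psi))
               (apply (tensor XB YC) psi))
         (apply (tensor (first_hit_sum WB p1 qB) (first_hit_sum WC p2 qC)) psi).
  rewrite /XB /YC !(telescope WB p1 qB) !(telescope WC p2 qC).
  rewrite !tensor_addl !tensor_addr !apply_opadd.
  by apply: functional_extensionality => i; rewrite /vadd /vsub; ring.
rewrite apply_vadd; apply: le_trans (norm2D_le _ _ t0) _.
apply: lerD; apply: ler_wpM2l.
- by rewrite addr_ge0 // ltW.
- exact: good_part_bound.
- by rewrite addr_ge0 // invr_ge0 ltW.
- exact: cross_term_bound.
Qed.

End PointwiseBound.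

(* Maxima of nonnegative families in algC, which is only partially ordered. *)
Section NonnegMax.
Variables (I : eqType) (f : I -> algC).
Hypothesis f_ge0 : forall i, 0 <= f i.

Lemma bigmax_ge0 (s : seq I) : 0 <= \big[Order.max/0]_(j <- s) f j.
Proof.
elim: s => [|a s IH]; first by rewrite big_nil.
by rewrite big_cons comparable_le_max ?f_ge0 // real_comparable ?ger0_real ?f_ge0.
Qed.

Lemma bigmax_ge (s : seq I) i : i \in s -> f i <= \big[Order.max/0]_(j <- s) f j.
Proof.
have cmp a s' : (f a >=< \big[Order.max/0]_(j <- s') f j)%O.
  by rewrite real_comparable ?ger0_real ?f_ge0 ?bigmax_ge0.
elim: s => [|a s IH] //; rewrite inE big_cons => /orP [/eqP ->|h].
  by rewrite comparable_le_max ?lexx.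
by rewrite comparable_le_max ?IH ?orbT.
Qed.

Lemma bigmax_le (s : seq I) c : 0 <= c -> (forall i, f i <= c) ->
  \big[Order.max/0]_(j <- s) f j <= c.
Proof.
move=> c0 h; elim: s => [|a s IH]; first by rewrite big_nil.
rewrite big_cons comparable_ge_max ?h ?IH //.
by rewrite real_comparable ?ger0_real ?f_ge0 ?bigmax_ge0.
Qed.

End NonnegMax.

Section Expectation.
Variables (T : finType) (mu : T -> algC).
Hypothesis mu_ge0 : forall t, 0 <= mu t.

Lemma expect_le (h1 h2 : T -> algC) :
  (forall t, h1 t <= h2 t) -> expect mu h1 <= expect mu h2.
Proof. by move=> h; apply: ler_sum => t _; exact: ler_wpM2l. Qed.

Lemma expect_ge0 (h : T -> algC) : (forall t, 0 <= h t) -> 0 <= expect mu h.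
Proof. by move=> h0; apply: sumr_ge0 => t _; exact: mulr_ge0. Qed.

Lemma expect_lin a b (h1 h2 : T -> algC) :
  expect mu (fun t => a * h1 t + b * h2 t) = a * expect mu h1 + b * expect mu h2.
Proof. by rewrite /expect !mulr_sumr -big_split; apply: eq_bigr => t _ /=; ring. Qed.

Lemma expect_scal a (h : T -> algC) : expect mu (fun t => a * h t) = a * expect mu h.
Proof. by rewrite /expect mulr_sumr; apply: eq_bigr => t _ /=; ring. Qed.

Lemma expect_sum n (h : 'I_n -> T -> algC) :
  expect mu (fun t => \sum_(j < n) h j t) = \sum_(j < n) expect mu (h j).
Proof. by rewrite /expect exchange_big; apply: eq_bigr => t _ /=; rewrite mulr_sumr. Qed.

Lemma expect_le_const (h : T -> algC) c : \sum_t mu t = 1 ->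
  (forall t, h t <= c) -> expect mu h <= c.
Proof.
move=> mu1 hc; apply: le_trans (expect_le (h2 := fun _ => c) hc) _.
by rewrite /expect -mulr_suml mu1 mul1r.
Qed.

Lemma expect_fibre_le (I : finType) (g : T -> I) (f : I -> algC) :
  (forall w, 0 <= f w) ->
  expect mu (fun t => f (g t)) <=
    (\big[Order.max/0]_(w : I) \sum_(t | g t == w) mu t) * \sum_w f w.
Proof.
move=> f0; rewrite /expect (partition_big g xpredT) //= mulr_sumr.
apply: ler_sum => w _.
have -> : \sum_(t | true && (g t == w)) mu t * f (g t) = (\sum_(t | g t == w) mu t) * f w.
  by rewrite mulr_suml; apply: eq_bigr => t /eqP ->.
apply: ler_wpM2r => //.
apply: (bigmax_ge (f := fun w => \sum_(t | g t == w) mu t)); last exact: mem_index_enum.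
by move=> x; apply: sumr_ge0.
Qed.

Lemma fibre_le1 (I : finType) (g : T -> I) w :
  \sum_t mu t = 1 -> \sum_(t | g t == w) mu t <= 1.
Proof.
move=> mu1; rewrite -mu1 big_mkcond /=; apply: ler_sum => t _.
by case: (g t == w).
Qed.

End Expectation.

Lemma expect2_lin (T1 T2 : finType) (mu1 : T1 -> algC) (mu2 : T2 -> algC) a b
  (h1 h2 : T1 -> T2 -> algC) :
  expect mu1 (fun x => expect mu2 (fun y => a * h1 x y + b * h2 x y))
  = a * expect mu1 (fun x => expect mu2 (h1 x)) + b * expect mu1 (fun x => expect mu2 (h2 x)).
Proof.
rewrite -expect_lin; apply: eq_bigr => x _; by rewrite expect_lin.
Qed.

Lemma expect2_sum2 (T1 T2 : finType) (mu1 : T1 -> algC) (mu2 : T2 -> algC) K n1 n2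
  (H : T1 -> T2 -> 'I_n1 -> 'I_n2 -> algC) :
  expect mu1 (fun x => expect mu2 (fun y => K * \sum_(j < n1) \sum_(l < n2) H x y j l))
  = K * \sum_(j < n1) \sum_(l < n2) expect mu1 (fun x => expect mu2 (fun y => H x y j l)).
Proof.
transitivity (expect mu1 (fun x =>
    K * \sum_(j < n1) \sum_(l < n2) expect mu2 (fun y => H x y j l))).
  apply: eq_bigr => x _; rewrite expect_scal expect_sum; congr (_ * (_ * _)).
  by apply: eq_bigr => j _; rewrite expect_sum.
rewrite expect_scal expect_sum; congr (_ * _); apply: eq_bigr => j _.
by rewrite expect_sum.
Qed.

Lemma avg_ge0 n (x : 'I_n -> algC) : (forall l, 0 <= x l) ->
  0 <= n%:R^-1 * \sum_(l < n) x l.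
Proof. by move=> h; apply: mulr_ge0; [rewrite invr_ge0 ler0n|exact: sumr_ge0]. Qed.

Lemma avg_le1 n (x : 'I_n -> algC) : (0 < n)%N -> (forall l, x l <= 1) ->
  n%:R^-1 * \sum_(l < n) x l <= 1.
Proof.
move=> n0 h; have nC : (0 : algC) < n%:R by rewrite ltr0n.
rewrite ler_pdivrMl // mulr1.
apply: le_trans (ler_sum _ (fun l _ => h l)) _.
by rewrite sumr_const card_ord.
Qed.

(* Optimising the free parameter t: first t -> 0 when M = 0, otherwise
   t = sqrt M, using B <= 9 and M <= 1. *)
Lemma le_of_le_all_scaled (L B : algC) : L \is Num.real -> 0 <= B ->
  (forall t, 0 < t -> L <= (1 + t) * B) -> L <= B.
Proof.
move=> Lr B0 h; have Br := ger0_real B0.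
case: (real_leP Lr Br) => // BL.
have B1 : 0 < B + 1 by rewrite ltr_wpDl.
have t0 : 0 < (L - B) / (B + 1) by rewrite divr_gt0 // subr_gt0.
have := h _ t0; rewrite -subr_ge0.
have -> : (1 + (L - B) / (B + 1)) * B - L = - ((L - B) / (B + 1)).
  by field; rewrite gt_eqF.
by rewrite oppr_ge0 => hle; have := lt_le_trans t0 hle; rewrite ltxx.
Qed.

Lemma optimise_t (L B M c : algC) : L \is Num.real -> 0 <= B -> B <= 9%:R ->
  0 <= M -> M <= 1 -> 0 <= c ->
  (forall t, 0 < t -> L <= (1 + t) * B + (1 + t^-1) * (c * M)) ->
  L <= B + (9%:R + 2%:R * c) * sqrtC M.
Proof.
move=> Lr B0 B9 M0 M1 c0 h.
have [Me|Mn0] := eqVneq M 0.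
  rewrite Me sqrtC0 mulr0 addr0; apply: le_of_le_all_scaled => // t t0.
  by have := h t t0; rewrite Me !mulr0 addr0.
set s := sqrtC M.
have s0 : 0 < s by rewrite lt_def sqrtC_eq0 Mn0 sqrtC_ge0.
have s1 : s <= 1 by rewrite /s -sqrtC1 ler_sqrtC // nnegrE.
have Ms : M = s * s by rewrite -expr2 sqrtCK.
apply: le_trans (h s s0) _; rewrite Ms.
have -> : (1 + s) * B + (1 + s^-1) * (c * (s * s)) = B + (s * B + c * s * s + c * s).
  by field; rewrite gt_eqF.
have -> : (9%:R + 2%:R * c) * s = 9%:R * s + c * s + c * s by ring.
rewrite lerD2l !lerD //; first by rewrite mulrC ler_wpM2r // ltW.
by rewrite -[leRHS]mulr1 ler_wpM2l // mulr_ge0 // ltW.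
Qed.

Definition real_pred : {pred algC} := fun x => x \is Num.real.

Fact real_pred_semiring_closed : semiring_closed real_pred.
Proof.
split; [split; [exact: rpred0 | exact: rpredD] | split; [exact: rpred1 | exact: rpredM]].
Qed.

HB.instance Definition _ :=
  GRing.isSemiringClosed.Build algC real_pred real_pred_semiring_closed.

Definition bound_poly : {mpoly algC[2]} := 9%:R + 2%:R * ('X_0 * 'X_1) ^+ 2.

Lemma bound_poly_real : bound_poly \is a mpolyOver 2 Num.real.
Proof.
change (bound_poly \is a mpolyOver 2 real_pred).
by rewrite /bound_poly rpredD ?rpredM ?rpred_nat ?rpredX ?mpolyOverX.
Qed.

Lemma bound_poly_eval (a b : algC) :
  bound_poly.@[fun i : 'I_2 => if i == 0 then a else b] = 9%:R + 2%:R * (a * b) ^+ 2.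
Proof. by rewrite /bound_poly !expr2 !mevalD !mevalM !mevalXU !rmorph_nat /= !meval1. Qed.

(* The data of the theorem. *)
Section ReprogrammedGame.
Variables (X : finType) (m : nat) (R : finType) (r : nat).
Variables (muF : {ffun X -> bits m} -> algC) (muZ : r.-tuple (bits m) -> algC).
Variables (g : r.-tuple (bits m) -> R) (v : r.-tuple X) (WB WC : finType).
Variables (UB : op (sys X m WB)) (UC : op (sys X m WC)).
Variables (psi : vec (sys X m WB * sys X m WC)%type) (qB qC : nat).
Variables (PiB : R -> op (sys X m WB)) (PiC : R -> op (sys X m WC)).
Hypotheses (muF_distr : distr muF) (muZ_distr : distr muZ).
Hypotheses (uB : unitary UB) (uC : unitary UC) (psi_unit : norm2 psi = 1).
Hypotheses (qB_gt0 : (0 < qB)%N) (qC_gt0 : (0 < qC)%N).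
Hypotheses (oB : orth_proj_family PiB) (oC : orth_proj_family PiC).

Definition on_v (W : finType) : pred (sys X m W) := fun i => i.1.1 \in v.
Arguments on_v : clear implicits.

Definition stepB (F : X -> bits m) : op (sys X m WB) := mulop UB (oracle WB F).
Definition stepC (F : X -> bits m) : op (sys X m WC) := mulop UC (oracle WC F).

Definition run (F : {ffun X -> bits m}) (z : r.-tuple (bits m)) (k l : nat) :=
  tensor (opexp (stepB (reprog F v z)) k) (opexp (stepC (reprog F v z)) l).

(* Weights of the final projectors on the states evolved without queries to
   v; they depend on F only, not on z. *)
Definition weightB (F : {ffun X -> bits m}) (w : R) : algC :=
  norm2 (apply (tensor (mulop (PiB w) (opexp (miss_step (stepB F) (on_v WB)) qB))
                       (@idop (sys X m WC))) psi).
Definition weightC (F : {ffun X -> bits m}) (w : R) : algC :=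
  norm2 (apply (tensor (@idop (sys X m WB))
                       (mulop (PiC w) (opexp (miss_step (stepC F) (on_v WC)) qC))) psi).

Definition query_v F z (k l : nat) : algC :=
  norm2 (apply (tensor (Pv WB v) (Pv WC v)) (apply (run F z k l) psi)).

Definition pmax : algC := \big[Order.max/0]_(w : R) \sum_(z | g z == w) muZ z.

Definition Mavg : algC :=
  (qB%:R)^-1 * \sum_(k < qB) ((qC%:R)^-1 * \sum_(l < qC)
    expect muF (fun F => expect muZ (fun z => query_v F z k l))).

Lemma isom_stepB F : isom (stepB F).
Proof. by apply: isom_mulop; [exact: isom_unitary|exact: oracle_isom]. Qed.

Lemma isom_stepC F : isom (stepC F).
Proof. by apply: isom_mulop; [exact: isom_unitary|exact: oracle_isom]. Qed.

Lemma miss_stepB_reprog (F : X -> bits m) z :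
  miss_step (stepB (reprog F v z)) (on_v WB) = miss_step (stepB F) (on_v WB).
Proof. by rewrite /miss_step /stepB -!mulopA oracle_reprog. Qed.

Lemma miss_stepC_reprog (F : X -> bits m) z :
  miss_step (stepC (reprog F v z)) (on_v WC) = miss_step (stepC F) (on_v WC).
Proof. by rewrite /miss_step /stepC -!mulopA oracle_reprog. Qed.

Lemma success_le F z t : 0 < t ->
  norm2 (apply (tensor (PiB (g z)) (PiC (g z))) (apply (run F z qB qC) psi))
  <= (1 + t) * (3 * (weightC F (g z) + 2 * weightB F (g z)))
   + (1 + t^-1) * (qB%:R * qC%:R * \sum_(j < qB) \sum_(l < qC) query_v F z j l).
Proof.
move=> t0; rewrite /weightB /weightC -(miss_stepB_reprog F z) -(miss_stepC_reprog F z).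
exact: (pointwise_bound (on_v WB) (on_v WC) psi qB qC (isom_stepB _) (isom_stepC _)
          (oB.1 (g z)) (oC.1 (g z)) t0).
Qed.

(* Summed over w, the weights add up to at most one each, since the
   projector families are orthogonal and the evolutions contract. *)
Lemma weights_le9 F :
  \sum_w 3 * (weightC F w + 2 * weightB F w) <= 9.
Proof.
have sC : \sum_w weightC F w <= 1.
  rewrite -psi_unit /weightC.
  under eq_bigr => w _ do rewrite tensor_id_mulop apply_mulop.
  apply: le_trans (orth_sum_tr _ oC) _.
  exact/contr_tr/contr_opexp/contr_miss_step/isom_stepC.
have sB : \sum_w weightB F w <= 1.
  rewrite -psi_unit /weightB.
  under eq_bigr => w _ do rewrite tensor_mulop_id apply_mulop.
  apply: le_trans (orth_sum_tl _ oB) _.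
  exact/contr_tl/contr_opexp/contr_miss_step/isom_stepB.
rewrite -mulr_sumr big_split /= -mulr_sumr.
have -> : (9 : algC) = 3 * (1 + 2 * 1) by ring.
by rewrite ler_wpM2l // lerD // ler_wpM2l.
Qed.

Lemma query_v_ge0 F z k l : 0 <= query_v F z k l.
Proof. exact: norm2_ge0. Qed.

Lemma query_v_le1 F z k l : query_v F z k l <= 1.
Proof.
rewrite -psi_unit /query_v.
apply: le_trans (contr_tensor (contr_dg (on_v WB)) (contr_dg (on_v WC)) _) _.
rewrite /run tensor_split apply_mulop isom_tl; last exact/isom_opexp/isom_stepB.
by rewrite isom_tr //; exact/isom_opexp/isom_stepC.
Qed.

Lemma pmax_ge0 : 0 <= pmax.
Proof. by apply: bigmax_ge0 => w; apply: sumr_ge0 => z _; exact: muZ_distr.1. Qed.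

Lemma pmax_le1 : pmax <= 1.
Proof.
apply: bigmax_le => [w||w]; last by apply: fibre_le1; [exact: muZ_distr.1|exact: muZ_distr.2].
  by apply: sumr_ge0 => z _; exact: muZ_distr.1.
exact: ler01.
Qed.

Lemma expected_query_v_ge0 k l :
  0 <= expect muF (fun F => expect muZ (fun z => query_v F z k l)).
Proof.
apply: expect_ge0 => [|F]; first exact: muF_distr.1.
by apply: expect_ge0 => [|z]; [exact: muZ_distr.1|exact: query_v_ge0].
Qed.

Lemma expected_query_v_le1 k l :
  expect muF (fun F => expect muZ (fun z => query_v F z k l)) <= 1.
Proof.
apply: (expect_le_const muF_distr.1 muF_distr.2) => F.
exact: (expect_le_const muZ_distr.1 muZ_distr.2 (fun z => query_v_le1 F z k l)).
Qed.

Lemma Mavg_ge0 : 0 <= Mavg.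
Proof. by apply: avg_ge0 => k; apply: avg_ge0 => l; exact: expected_query_v_ge0. Qed.

Lemma Mavg_le1 : Mavg <= 1.
Proof. by apply: avg_le1 => // k; apply: avg_le1 => // l; exact: expected_query_v_le1. Qed.

Lemma expected_queries :
  expect muF (fun F => expect muZ (fun z =>
    qB%:R * qC%:R * \sum_(j < qB) \sum_(l < qC) query_v F z j l))
  = (qB%:R * qC%:R) ^+ 2 * Mavg.
Proof.
rewrite expect2_sum2.
have qB0 : (qB%:R : algC) != 0 by rewrite pnatr_eq0 -lt0n.
have qC0 : (qC%:R : algC) != 0 by rewrite pnatr_eq0 -lt0n.
rewrite /Mavg -mulr_sumr; set S := \sum_(k < qB) _.
by field; rewrite qB0 qC0.
Qed.

Lemma expected_weights :
  expect muF (fun F => expect muZ (fun z =>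
    3 * (weightC F (g z) + 2 * weightB F (g z)))) <= 9 * pmax.
Proof.
apply: (expect_le_const muF_distr.1 muF_distr.2) => F.
apply: le_trans (expect_fibre_le muZ_distr.1 g
  (f := fun w => 3 * (weightC F w + 2 * weightB F w)) _) _.
  by move=> w; rewrite mulr_ge0 // addr_ge0 ?mulr_ge0 ?norm2_ge0.
by rewrite mulrC ler_wpM2r ?pmax_ge0 ?weights_le9.
Qed.

Lemma expected_success_le t : 0 < t ->
  expect muF (fun F => expect muZ (fun z =>
    norm2 (apply (tensor (PiB (g z)) (PiC (g z))) (apply (run F z qB qC) psi))))
  <= (1 + t) * (9 * pmax) + (1 + t^-1) * ((qB%:R * qC%:R) ^+ 2 * Mavg).
Proof.
move=> t0; rewrite -expected_queries.
have a0 : 0 <= 1 + t by rewrite addr_ge0 // ltW.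
have b0 : 0 <= 1 + t^-1 by rewrite addr_ge0 // invr_ge0 ltW.
apply: le_trans (_ : _ <= expect muF (fun F => expect muZ (fun z =>
  (1 + t) * (3 * (weightC F (g z) + 2 * weightB F (g z)))
  + (1 + t^-1) * (qB%:R * qC%:R * \sum_(j < qB) \sum_(l < qC) query_v F z j l)))) _.
  apply: expect_le => [|F]; first exact: muF_distr.1.
  by apply: expect_le => [|z]; [exact: muZ_distr.1|exact: success_le].
rewrite expect2_lin lerD2r ler_wpM2l //; exact: expected_weights.
Qed.

End ReprogrammedGame.

Theorem mainTheorem8 :
  exists p : {mpoly algC[2]}, p \is a mpolyOver 2 Num.real /\
  forall (X : finType) (m : nat) (R : finType) (r : nat)
    (muF : {ffun X -> bits m} -> algC)
    (Zset : {set r.-tuple (bits m)}) (muZ : r.-tuple (bits m) -> algC)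
    (g : r.-tuple (bits m) -> R) (v : r.-tuple X)
    (WB WC : finType)
    (UB : op (sys X m WB)) (UC : op (sys X m WC))
    (psi : vec (sys X m WB * sys X m WC)%type)
    (qB qC : nat)
    (PiB : R -> op (sys X m WB)) (PiC : R -> op (sys X m WC)),
    distr muF ->
    distr muZ -> (forall z, z \notin Zset -> muZ z = 0) ->
    {in Zset &, injective g} ->
    uniq v ->
    unitary UB -> unitary UC ->
    norm2 psi = 1 ->
    (0 < qB)%N -> (0 < qC)%N ->
    orth_proj_family PiB -> orth_proj_family PiC ->
    let Fvz (F : {ffun X -> bits m}) z := reprog F v z in
    let run (F : {ffun X -> bits m}) (z : r.-tuple (bits m)) (k l : nat) :=
      tensor (opexp (mulop UB (oracle WB (Fvz F z))) k)
             (opexp (mulop UC (oracle WC (Fvz F z))) l) in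
    let pmax := \big[Order.max/0]_(w : R) \sum_(z | g z == w) muZ z in
    let M :=
      (qB%:R)^-1 * \sum_(k < qB) ((qC%:R)^-1 * \sum_(l < qC)
        expect muF (fun F => expect muZ (fun z =>
          norm2 (apply (tensor (Pv WB v) (Pv WC v)) (apply (run F z k l) psi))))) in
    expect muF (fun F => expect muZ (fun z =>
      norm2 (apply (tensor (PiB (g z)) (PiC (g z))) (apply (run F z qB qC) psi))))
    <= 9 * pmax + p.@[fun i : 'I_2 => if i == 0 then qB%:R else qC%:R] * sqrtC M.
Proof.
exists bound_poly; split; first exact: bound_poly_real.
move=> X m R r muF Zset muZ g v WB WC UB UC psi qB qC PiB PiC.
move=> dF dZ _ _ _ uB uC psi1 qB0 qC0 oB oC /=.
rewrite bound_poly_eval.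
have [dF0 _] := dF; have [dZ0 _] := dZ.
apply: (optimise_t (B := 9 * pmax muZ g) (M := Mavg muF muZ v UB UC psi qB qC)).
- apply: ger0_real; apply: expect_ge0 => // F; apply: expect_ge0 => // z.
  exact: norm2_ge0.
- by rewrite mulr_ge0 ?pmax_ge0.
- by rewrite -[leRHS]mulr1 ler_wpM2l ?pmax_le1.
- exact: Mavg_ge0.
- exact: Mavg_le1.
- by rewrite exprn_ge0 // mulr_ge0.
- by move=> t t0; exact: expected_success_le.
Qed.
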